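(* Let $a,b\in\mathbb{Q}_3$ with $\gamma(a)=\gamma(b)=0$ and $a_0=1$. Then $x=\sum_{k\ge0}x_k3^k\in\mathbb{Z}_3^*$ is a solution of $x^3+ax=b$ if and only if the congruences $$x_0^3+a_0x_0\equiv b_0 \pmod 3,$$ $$x_1a_0+x_0a_1+N_1(x_0)+M_1(x_0)\equiv b_1\pmod 3,$$ $$x_ka_0+x_{k-1}a_1+\dots+x_0a_k+x_0^2x_{k-1}+N_k(x_0,\dots,x_{k-1})+M_k(x_0,\dots,x_{k-1})\equiv b_k\pmod 3,\quad k\ge2,$$ are fulfilled, where the integers $M_k(x_0,\dots,x_{k-1})$ are defined successively by $$x_0^3+a_0x_0=b_0+3M_1(x_0),$$ $$x_1a_0+x_0a_1+N_1(x_0)=b_1-M_1(x_0)+3M_2(x_0,x_1),$$ $$x_{k-1}a_0+x_{k-2}a_1+\dots+x_0a_{k-1}+x_0^2x_{k-2}+N_{k-1}(x_0,\dots,x_{k-2})=b_{k-1}-M_{k-1}(x_0,\dots,x_{k-2})+3M_k(x_0,\dots,x_{k-1}),\quad k\ge3.$$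
   Context: Every nonzero $3$-adic number has a unique canonical form; write $a=3^{\gamma(a)}(a_0+a_13+a_23^2+\dots)$, $b=3^{\gamma(b)}(b_0+b_13+b_23^2+\dots)$ with digits $a_j,b_j\in\{0,1,2\}$, $a_0,b_0\ne0$, and $\gamma(a),\gamma(b)\in\mathbb{Z}$ the valuations. $\mathbb{Z}_3^*$ is the set of $3$-adic units; an element $x\in\mathbb{Z}_3^*$ is written $x=x_0+x_13+x_23^2+\dots$ with $x_j\in\{0,1,2\}$, $x_0\neq0$. For $k\ge1$, $$N_k(x_0,\dots,x_{k-1})=\sum \frac{3!}{m_0!m_1!\cdots m_{k-1}!}x_0^{m_0}x_1^{m_1}\cdots x_{k-1}^{m_{k-1}},$$ the sum over nonnegative integers $m_0,\dots,m_{k-1}$ with $\sum_{i=0}^{k-1}m_i=3$ and $\sum_{i=1}^{k-1}im_i=k$; in particular $N_1=0$. (These satisfy $(\sum_i x_i3^i)^3=x_0^3+\sum_{k\ge1}(3x_0^2x_k+N_k)3^k$.) *)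

From HB Require Import structures.
From mathcomp Require Import all_boot all_order all_algebra.
Set Implicit Arguments. Unset Strict Implicit. Unset Printing Implicit Defensive.
Import Order.TTheory GRing.Theory Num.Theory.
Local Open Scope ring_scope.

(* A 3-adic integer z = z_0 + z_1 3 + z_2 3^2 + ... given by its digits. *)
Definition digits3 := nat -> 'I_3.

Definition dig (z : digits3) (i : nat) : int := Posz (z i).

Definition trunc3 (z : digits3) (n : nat) : int :=
  \sum_(i < n) dig z i * 3 ^+ i.

(* Equality of 3-adic integers u = v, where u and v are given as limits of the
   integer sequences U n, V n (Z_3 = projective limit of Z/3^n). *)
Definition padic_eq (U V : nat -> int) : Prop :=
  forall n : nat, (U n = V n %[mod (3 ^+ n)%R])%Z.

Definition is_solution (a b x : digits3) : Prop :=
  padic_eq (fun n => trunc3 x n ^+ 3 + trunc3 a n * trunc3 x n)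
           (fun n => trunc3 b n).

(* N_k(x_0,...,x_{k-1}) = sum over (m_0..m_{k-1}) with sum m_i = 3 and
   sum i m_i = k of 3!/(m_0!...m_{k-1}!) x_0^{m_0}...x_{k-1}^{m_{k-1}}.
   (Each m_i <= 3 since they sum to 3, so m ranges over 'I_k -> 'I_4.) *)
Definition Nk (k : nat) (x : nat -> int) : int :=
  \sum_(m : {ffun 'I_k -> 'I_4} |
          ((\sum_(i < k) (m i : nat) == 3)%N && (\sum_(i < k) (i * m i) == k)%N))
    (Posz (3`! %/ \prod_(i < k) (m i)`!)%N * \prod_(i < k) x i ^+ (m i)).

Definition Sk (a x : digits3) (k : nat) : int :=
  if k is 0%N then dig x 0 ^+ 3 + dig a 0 * dig x 0
  else \sum_(i < k.+1) dig x (k - i)%N * dig a i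
       + (if (2 <= k)%N then dig x 0 ^+ 2 * dig x k.-1 else 0)
       + Nk k (dig x).

(* M_0 = 0 (convention), and S_{k} = b_k - M_k + 3 M_{k+1}, i.e.
   M_{k+1} = (S_k - b_k + M_k) / 3  (an exact division whenever the previous
   congruences hold). *)
Fixpoint Mk (a b x : digits3) (k : nat) : int :=
  match k with
  | 0%N => 0
  | k'.+1 => ((Sk a x k' - dig b k' + Mk a b x k') %/ 3)%Z
  end.

(* View the digits of x, a, b as integer polynomials evaluated at 3.  The
   coefficient of X^k in x^3 + a x is the digit convolution of a x, plus N_k
   (multinomial theorem), plus 3 x_0^2 x_k; moving the last term to the next
   digit as x_0^2 x_k turns it into S_k.  Hence, modulo 3^n, x^3 + a x - b is
   the partial sum of sum_k (S_k - b_k) 3^k, and by carrying, all these partial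
   sums vanish modulo 3^n exactly when every S_k - b_k + M_k is divisible by 3. *)

From HB Require Import structures.
From mathcomp Require Import all_boot all_order all_algebra.
From mathcomp Require Import zify ring.
Set Implicit Arguments. Unset Strict Implicit. Unset Printing Implicit Defensive.
Import Order.TTheory GRing.Theory Num.Theory.
Local Open Scope ring_scope.

Lemma prod_fact_dvd_fact_sum k (m : 'I_k -> nat) :
  (\prod_(i < k) (m i)`! %| (\sum_(i < k) m i)`!)%N.
Proof.
elim: k m => [|k IHk] m; first by rewrite !big_ord0.
rewrite !big_ord_recr /=; set s := (\sum_(i < k) _)%N.
apply: dvdn_trans (dvdn_mul (IHk _) (dvdnn (m ord_max)`!)) _.
by rewrite -(bin_fact (leq_addl s (m ord_max))) addnK mulnC dvdn_mull.
Qed.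

Section FfunSnoc.
Variables (T : finType) (k : nat).

Definition ffun_snoc (g : {ffun 'I_k -> T}) (t : T) : {ffun 'I_k.+1 -> T} :=
  [ffun i => if unlift ord_max i is Some j then g j else t].

Lemma ffun_snoc_max g t : ffun_snoc g t ord_max = t.
Proof. by rewrite ffunE unlift_none. Qed.

Lemma widen_ord_lift_max (i : 'I_k) : widen_ord (leqnSn k) i = lift ord_max i.
Proof. by apply: val_inj; rewrite /= /bump leqNgt ltn_ord. Qed.

Lemma ffun_snoc_widen g t i : ffun_snoc g t (widen_ord (leqnSn k) i) = g i.
Proof. by rewrite ffunE widen_ord_lift_max liftK. Qed.

Lemma ffun_snoc_bij : bijective (fun p : T * {ffun 'I_k -> T} => ffun_snoc p.2 p.1).
Proof.
exists (fun m : {ffun 'I_k.+1 -> T} =>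
  (m ord_max, [ffun i : 'I_k => m (widen_ord (leqnSn k) i)])).
  move=> [t g] /=; rewrite ffun_snoc_max; congr (_, _).
  by apply/ffunP => i; rewrite ffunE ffun_snoc_widen.
move=> m; apply/ffunP => i; rewrite ffunE.
by case: unliftP => [j|] ->; rewrite ?ffunE ?widen_ord_lift_max.
Qed.

Lemma big_ffun_ord_recr (R : nmodType) (F : {ffun 'I_k.+1 -> T} -> R) :
  \sum_(m : {ffun 'I_k.+1 -> T}) F m =
  \sum_(t : T) \sum_(g : {ffun 'I_k -> T}) F (ffun_snoc g t).
Proof. by rewrite pair_bigA (reindex _ (onW_bij _ ffun_snoc_bij)). Qed.

End FfunSnoc.

Lemma fact_div_mul_bin s t p : (t <= s)%N -> (p %| (s - t)`!)%N ->
  (s`! %/ (p * t`!) = 'C(s, t) * ((s - t)`! %/ p))%N.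
Proof.
move=> le_ts /dvdnP [q def_q].
have p_gt0 : (0 < p)%N.
  by move: (fact_gt0 (s - t)); rewrite def_q; case: (p) => //; rewrite muln0.
rewrite -(bin_fact le_ts) def_q mulnK // (_ : _ * _ = 'C(s, t) * q * (p * t`!))%N; last by ring.
by rewrite mulnK // muln_gt0 p_gt0 fact_gt0.
Qed.

Lemma exprn_sum_multinomial (R : comNzRingType) d k (y : 'I_k -> R) s : (s <= d)%N ->
  \sum_(m : {ffun 'I_k -> 'I_d.+1} | (\sum_(i < k) (m i : nat) == s)%N)
     ((s`! %/ \prod_(i < k) (m i)`!)%N%:R * \prod_(i < k) y i ^+ m i)
  = (\sum_(i < k) y i) ^+ s.
Proof.
elim: k y s => [|k IHk] y s le_sd.
  rewrite big_ord0 expr0n.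
  under eq_bigl do rewrite big_ord0.
  under eq_bigr do rewrite !big_ord0 divn1 mulr1.
  case: s {le_sd} => [|s] /=; last by rewrite big_pred0.
  by rewrite sumr_const card_ffun !card_ord.
rewrite big_mkcond big_ffun_ord_recr /=.
set y' := fun i : 'I_k => y (widen_ord (leqnSn k) i).
have term_snoc (t : 'I_d.+1) g :
    (if (\sum_(i < k.+1) (ffun_snoc g t i : nat) == s)%N then
       (s`! %/ \prod_(i < k.+1) (ffun_snoc g t i)`!)%N%:R *
       \prod_(i < k.+1) y i ^+ ffun_snoc g t i
     else 0)
  = if (t <= s)%N then
      (if (\sum_(i < k) (g i : nat) == s - t)%N then
         ((s - t)`! %/ \prod_(i < k) (g i)`!)%N%:R * \prod_(i < k) y' i ^+ g i
       else 0) * (y ord_max ^+ t *+ 'C(s, t))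
    else 0.
  have sum_snoc : (\sum_(i < k.+1) (ffun_snoc g t i : nat) = \sum_(i < k) g i + t)%N.
    by rewrite big_ord_recr ffun_snoc_max; under eq_bigr do rewrite ffun_snoc_widen.
  have fact_snoc :
      (\prod_(i < k.+1) (ffun_snoc g t i)`! = \prod_(i < k) (g i)`! * t`!)%N.
    by rewrite big_ord_recr ffun_snoc_max; under eq_bigr do rewrite ffun_snoc_widen.
  have pow_snoc : \prod_(i < k.+1) y i ^+ ffun_snoc g t i =
                  \prod_(i < k) y' i ^+ g i * y ord_max ^+ t.
    by rewrite big_ord_recr ffun_snoc_max; under eq_bigr do rewrite ffun_snoc_widen.
  rewrite sum_snoc fact_snoc pow_snoc.
  case: leqP => [le_ts|lt_st]; last by rewrite ifN //; apply/eqP; lia.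
  have -> : (\sum_(i < k) g i + t == s)%N = (\sum_(i < k) g i == s - t)%N by apply/eqP/eqP; lia.
  case: eqP => [sum_g|_]; last by rewrite mul0r.
  rewrite fact_div_mul_bin // -?sum_g ?prod_fact_dvd_fact_sum //.
  by rewrite natrM mulrnAr -mulr_natl; ring.
under eq_bigr do under eq_bigr do rewrite term_snoc.
rewrite (eq_bigr (fun t : 'I_d.+1 => if (t < s.+1)%N then
    (\sum_(i < k) y' i) ^+ (s - t) * (y ord_max ^+ t *+ 'C(s, t)) else 0)); last first.
  move=> t _; rewrite ltnS; case: leqP => _; last by rewrite big1.
  by rewrite -mulr_suml -big_mkcond IHk //; lia.
rewrite -big_mkcond -(big_ord_widen _ (fun t => (\sum_(i < k) y' i) ^+ (s - t) *
    (y ord_max ^+ t *+ 'C(s, t)))) // [in RHS]big_ord_recr exprDn.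
by apply: eq_bigr => t _; rewrite mulrnAr.
Qed.

Definition digit_poly (z : digits3) (n : nat) : {poly int} := \poly_(i < n) dig z i.

Lemma horner_digit_poly z n : (digit_poly z n).[3] = trunc3 z n.
Proof. by rewrite horner_poly. Qed.

Lemma coef_digit_poly z n i : (digit_poly z n)`_i = if (i < n)%N then dig z i else 0.
Proof. exact: coef_poly. Qed.

Lemma take_digit_poly z m n : (m <= n)%N -> take_poly m (digit_poly z n) = digit_poly z m.
Proof.
move=> le_mn; apply/polyP => i; rewrite coef_take_poly !coef_digit_poly.
by case: ltnP => // lt_im; rewrite (leq_trans lt_im le_mn).
Qed.

Lemma digit_polyS z n : digit_poly z n.+1 = digit_poly z n + (dig z n)%:P * 'X^n.
Proof.
apply/polyP => i; rewrite coefD coefCM coefXn !coef_digit_poly ltnS.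
by case: ltngtP => [||->]; rewrite ?mulr0 ?mulr1 ?addr0 ?add0r.
Qed.

Lemma coef_exprn_take_poly (R : comNzRingType) (p : {poly R}) m e k : (k < m)%N ->
  (p ^+ e)`_k = (take_poly m p ^+ e)`_k.
Proof.
move=> lt_km; suff [r ->] : exists r, p ^+ e = take_poly m p ^+ e + r * 'X^m.
  by rewrite coefD coefMXn lt_km addr0.
elim: e => [|e [r IHe]]; first by exists 0; rewrite mul0r addr0.
set q := take_poly m p; set h := drop_poly m p.
exists (r * q + q ^+ e * h + r * h * 'X^m).
rewrite !exprS IHe -[p in p * _](poly_take_drop m) -/q -/h; ring.
Qed.

Lemma coef_Nk (x : nat -> int) k : Nk k x = ((\poly_(i < k) x i) ^+ 3)`_k.
Proof.
rewrite poly_def -(@exprn_sum_multinomial _ 3 k (fun i : 'I_k => x i *: 'X^i)) //.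
rewrite coef_sum /Nk big_mkcond [RHS]big_mkcond /=; apply: eq_bigr => m _.
have -> : \prod_(i < k) (x i *: 'X^i) ^+ m i =
          (\prod_(i < k) x i ^+ m i) *: 'X^(\sum_(i < k) i * m i).
  rewrite -prodrXr -scaler_prod; apply: eq_bigr => i _.
  by rewrite exprZn -exprM.
case: eqP => //= _.
rewrite mulr_natl coefMn coefZ coefXn eq_sym.
by case: eqP; rewrite ?mulr1 ?mulr0 ?mul0rn // -mulr_natl natz.
Qed.

Lemma coef_digit_poly_cube x n k : (k < n)%N ->
  ((digit_poly x n) ^+ 3)`_k =
  if k is 0 then dig x 0 ^+ 3 else Nk k (dig x) + dig x 0 ^+ 2 * dig x k *+ 3.
Proof.
move=> lt_kn; rewrite (coef_exprn_take_poly _ _ (ltnSn k)) take_digit_poly // digit_polyS.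
case: k {lt_kn} => [|k].
  by rewrite /digit_poly poly_def big_ord0 add0r expr0 mulr1 -rmorphXn coefC.
set P := digit_poly x k.+1; set c := dig x k.+1.
have -> : (P + c%:P * 'X^(k.+1)) ^+ 3 = P ^+ 3 + (c%:P * P ^+ 2) *+ 3 * 'X^(k.+1)
    + (c%:P ^+ 2 * P *+ 3 + c%:P ^+ 3 * 'X^(k.+1)) * 'X^(k.+1 + k.+1).
  by rewrite exprD; ring.
rewrite !coefD !coefMXn ltnn subnn addnS ltnS leq_addr.
rewrite addr0 coef_Nk coefMn coefCM expr2 coef0M !coef_digit_poly /=.
by congr (_ + _ *+ 3); ring.
Qed.

Lemma coef_digit_poly_mul a x n k : (k < n)%N ->
  (digit_poly a n * digit_poly x n)`_k = \sum_(i < k.+1) dig x (k - i) * dig a i.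
Proof.
move=> lt_kn; rewrite coefM; apply: eq_bigr => i _.
have lt_in : (i < n)%N by rewrite (leq_ltn_trans (leq_ord i)).
by rewrite !coef_digit_poly lt_in (leq_ltn_trans (leq_subr i k)) // mulrC.
Qed.

(* The coefficient [3 x_0^2 x_k] of [X^k] in [x^3] enters the paper's [S_(k+1)]
   as [x_0^2 x_k]: its factor [3] is carried to the next digit. *)
Definition deferred_term (x : digits3) (k : nat) : int :=
  if (2 <= k)%N then dig x 0 ^+ 2 * dig x k.-1 else 0.

Lemma coef_digit_poly_cubic a x n k : (k < n)%N ->
  (digit_poly x n ^+ 3 + digit_poly a n * digit_poly x n)`_k =
  Sk a x k + deferred_term x k.+1 * 3 - deferred_term x k.
Proof.
move=> lt_kn; rewrite coefD coef_digit_poly_cube // coef_digit_poly_mul //.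
rewrite /Sk /deferred_term; case: k {lt_kn} => [|[|k]] /=.
- by rewrite big_ord1 subr0 addr0; ring.
- by rewrite addr0 subr0; ring.
- by rewrite mulr_natr; ring.
Qed.

Lemma horner_sub_partial_sum_dvd (c : int) (p : {poly int}) n :
  (c ^+ n %| p.[c] - \sum_(i < n) p`_i * c ^+ i)%Z.
Proof.
rewrite -{1}(poly_take_drop n p) hornerD hornerM hornerXn.
rewrite (horner_coef_wide _ (size_take_poly _ _)).
under eq_bigr do rewrite coef_take_poly ltn_ord.
by rewrite addrAC subrr add0r dvdz_mull.
Qed.

Lemma cubic_residual_dvd a b x n :
  (3 ^+ n %| (trunc3 x n ^+ 3 + trunc3 a n * trunc3 x n - trunc3 b n)
             - \sum_(k < n) (Sk a x k - dig b k) * 3 ^+ k)%Z.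
Proof.
have := horner_sub_partial_sum_dvd 3
  (digit_poly x n ^+ 3 + digit_poly a n * digit_poly x n) n.
rewrite !hornerE !horner_digit_poly.
under eq_bigr => k _ do rewrite coef_digit_poly_cubic //.
pose f k := deferred_term x k * 3 ^+ k.
have telescoped :
    \sum_(k < n) (Sk a x k + deferred_term x k.+1 * 3 - deferred_term x k) * 3 ^+ k
    = \sum_(k < n) Sk a x k * 3 ^+ k + f n.
  rewrite (eq_bigr (fun k : 'I_n => Sk a x k * 3 ^+ k + (f k.+1 - f k))) => [|k _]; last first.
    by rewrite /f exprS; ring.
  rewrite big_split /= -(big_mkord xpredT (fun k => f k.+1 - f k)) telescope_sumr //.
  by rewrite /f /deferred_term mul0r subr0.
rewrite telescoped => dvd_cubic.
have -> : trunc3 b n = \sum_(k < n) dig b k * 3 ^+ k by [].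
rewrite (eq_bigr _ (fun (k : 'I_n) _ => mulrBl (3 ^+ k) (Sk a x k) (dig b k))) sumrB.
rewrite (_ : _ - _ - _ = trunc3 x n ^+ 3 + trunc3 a n * trunc3 x n
                         - (\sum_(k < n) Sk a x k * 3 ^+ k + f n) + f n); last by ring.
by rewrite rpredD // dvdz_mull.
Qed.

Lemma is_solution_iff_residual_dvd a b x : is_solution a b x <->
  forall n, (3 ^+ n %| \sum_(k < n) (Sk a x k - dig b k) * 3 ^+ k)%Z.
Proof.
have residual_dvd n : (3 ^+ n %| trunc3 x n ^+ 3 + trunc3 a n * trunc3 x n - trunc3 b n)%Z =
    (3 ^+ n %| \sum_(k < n) (Sk a x k - dig b k) * 3 ^+ k)%Z.
  by rewrite -[X in (_ %| X)%Z](subrK (\sum_(k < n) (Sk a x k - dig b k) * 3 ^+ k))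
             rpredDl // cubic_residual_dvd.
split=> sol n.
  by rewrite -residual_dvd -eqz_mod_dvd; apply/eqP; apply: sol.
by apply/eqP; rewrite eqz_mod_dvd residual_dvd.
Qed.

Section Carries.
Variables (p : int) (d M : nat -> int).
Hypotheses (M0 : M 0 = 0) (MS : forall k, M k.+1 = ((d k + M k) %/ p)%Z).

Lemma sum_digits_carry n : (forall k, (k < n)%N -> (p %| d k + M k)%Z) ->
  \sum_(k < n) d k * p ^+ k = M n * p ^+ n.
Proof.
elim: n => [|n IHn] dvd_carry; first by rewrite big_ord0 M0 mul0r.
rewrite big_ord_recr /= IHn => [|k lt_kn]; last exact/dvd_carry/ltnW.
by rewrite MS exprS mulrA divzK ?dvd_carry // mulrDl addrC.
Qed.

Lemma dvd_partial_sums_iff : p != 0 ->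
  (forall n, (p ^+ n %| \sum_(k < n) d k * p ^+ k)%Z) <-> (forall k, (p %| d k + M k)%Z).
Proof.
move=> p_neq0; split=> [dvd_sums|dvd_carry n]; last first.
  by rewrite sum_digits_carry ?dvdz_mull // => k _; apply: dvd_carry.
suff dvd_below n k : (k < n)%N -> (p %| d k + M k)%Z by move=> k; apply: (dvd_below k.+1).
elim: n k => [//|n IHn] k; rewrite ltnS leq_eqVlt => /predU1P [->|]; last exact: IHn.
have := dvd_sums n.+1; rewrite big_ord_recr /= sum_digits_carry // -mulrDl addrC.
by rewrite exprSr [_ * p ^+ n]mulrC dvdz_mul2l // expf_neq0.
Qed.

End Carries.

Theorem theorem3p1 (a b x : digits3) :
  (a 0%N : nat) = 1%N -> (b 0%N : nat) <> 0%N -> (x 0%N : nat) <> 0%N ->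
  (is_solution a b x <->
   forall k : nat, (Sk a x k + Mk a b x k = dig b k %[mod 3])%Z).
Proof.
move=> _ _ _.
have carry_congr k : (3 %| (Sk a x k - dig b k) + Mk a b x k)%Z <->
                     (Sk a x k + Mk a b x k = dig b k %[mod 3])%Z.
  by rewrite addrAC -eqz_mod_dvd; split=> /eqP.
apply: iff_trans (is_solution_iff_residual_dvd a b x) _.
apply: iff_trans
  (@dvd_partial_sums_iff 3 (fun k => Sk a x k - dig b k) (Mk a b x) _ _ _) _ => //.
by split=> congr k; apply/carry_congr.
Qed.
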